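(* Let a regular network on $n$ cells with adjacency matrix $A$ be given. A subspace $S\subseteq\mathbb{C}^n$ is a synchrony subspace if and only if $S$ is a polydiagonal and $S=J_1\oplus\cdots\oplus J_m$ for some special Jordan subspaces $J_1,\dots,J_m$ to the network.
   Context: A regular network is a finite directed graph on cells $1,\dots,n$ (loops and multiple arrows allowed) in which every cell receives the same number $v$ of arrows (the valency). Its adjacency matrix $A=[a_{ij}]$ has $a_{ij}$ equal to the number of arrows cell $i$ receives from cell $j$; every row sum is $v$. $A$ acts on the total phase space $\mathbb{C}^n$ (each cell phase space taken to be $\mathbb{C}$). A polydiagonal is a subspace of $\mathbb{C}^n$ of the form $\{x : x_i=x_j \text{ for all } (i,j)\in R\}$ for some (possibly empty) set $R$ of index pairs. A synchrony subspace is a polydiagonal that is invariant under $A$ (by a theorem of Golubitsky, Stewart and Török this is equivalent to being flow-invariant for all admissible vector fields of the network). $F=\{x_1=\cdots=x_n\}$ is the fully synchrony subspace. $P(W)$ is the smallest polydiagonal containing a subspace $W$. For an eigenvalue $\lambda$ of $A$, the generalized eigenspace is $G_\lambda=\operatorname{Ker}(A-\lambda I)^p$ for $p$ large. A Jordan chain of length $k$ for $\lambda$ is a sequence of nonzero vectors $x_1,\dots,x_k$ with $(A-\lambda I)x_1=0$ and $(A-\lambda I)x_i=x_{i-1}$ for $2\le i\le k$; a Jordan subspace is the span of a Jordan chain. A Jordan subspace $W$ of a generalized eigenspace $G$ is a special Jordan subspace to the network if for every Jordan subspace $U$ of $G$ with $\dim U=\dim W$ and $P(U)\subseteq P(W)$,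 either $P(U)=P(W)$ or $U=F$. *)

(* Subspaces of R^n are row spaces of n x n matrices
   (mxalgebra, %MS).  Vectors of the phase space are row vectors 'rV_n; the
   linear map x |-> A x on column vectors is x |-> x *m A^T on row vectors. *)
From HB Require Import structures.
From mathcomp Require Import all_boot all_order all_algebra.
Set Implicit Arguments. Unset Strict Implicit. Unset Printing Implicit Defensive.
Import Order.TTheory GRing.Theory Num.Theory.
Local Open Scope ring_scope.

Section Network.
Variables (R : numClosedFieldType) (n : nat).

Definition regular_network (A : 'M[nat]_n) (v : nat) : Prop :=
  forall i : 'I_n, (\sum_(j < n) A i j)%N = v.

Definition adjR (A : 'M[nat]_n) : 'M[R]_n := (map_mx (fun a : nat => a%:R) A)^T.

(* column vector e_i - e_j ;  x *m diag_pair i j = x_i - x_j *)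
Definition diag_pair (i j : 'I_n) : 'M[R]_(n, 1) :=
  \col_k ((k == i)%:R - (k == j)%:R).

Definition polydiag (r : {set 'I_n * 'I_n}) : 'M[R]_n :=
  (\bigcap_(p in r) kermx (diag_pair p.1 p.2))%MS.

Definition is_polydiagonal (S : 'M[R]_n) : Prop :=
  exists r : {set 'I_n * 'I_n}, (S == polydiag r)%MS.

Definition Fsync : 'M[R]_n := polydiag setT.

Definition Pclos (W : 'M[R]_n) : 'M[R]_n :=
  (\bigcap_(r : {set 'I_n * 'I_n} | (W <= polydiag r)%MS) polydiag r)%MS.

Definition is_synchrony (A : 'M[nat]_n) (S : 'M[R]_n) : Prop :=
  is_polydiagonal S /\ (S *m adjR A <= S)%MS.

(* Jordan chain x_1, ..., x_k (here indexed x 0, ..., x (k-1)) for lam *)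
Definition jordan_chain (A : 'M[nat]_n) (lam : R) (k : nat)
    (x : nat -> 'rV[R]_n) : Prop :=
  [/\ (forall i, (i < k)%N -> x i != 0),
      x 0%N *m (adjR A - lam%:M) = 0 &
      (forall i, (i.+1 < k)%N -> x i.+1 *m (adjR A - lam%:M) = x i)].

Definition is_jordan_subspace (A : 'M[nat]_n) (lam : R) (W : 'M[R]_n) : Prop :=
  exists k (x : nat -> 'rV[R]_n),
    [/\ (0 < k)%N, jordan_chain A lam k x &
        (W == \matrix_(i < k) x (i : nat))%MS].

Definition is_special (A : 'M[nat]_n) (W : 'M[R]_n) : Prop :=
  exists lam : R, is_jordan_subspace A lam W /\
    forall U : 'M[R]_n, is_jordan_subspace A lam U ->
      \rank U = \rank W -> (Pclos U <= Pclos W)%MS ->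
      (Pclos U == Pclos W)%MS \/ (U == Fsync)%MS.

End Network.

From HB Require Import structures.
From mathcomp Require Import all_boot all_order all_algebra.
From Stdlib Require Import Classical ClassicalEpsilon.
From mathcomp Require Import zify ring.
Set Implicit Arguments. Unset Strict Implicit. Unset Printing Implicit Defensive.
Import Order.TTheory GRing.Theory Num.Theory.

(* Backward direction: a special Jordan subspace is A-invariant, hence so is
   any sum of them; a polydiagonal that is such a sum is a synchrony subspace.

   Forward direction: let S be an A-invariant polydiagonal.
   - S is the direct sum of its intersections S :&: G_lam with the
     generalized eigenspaces of A (Bezout; stable_primary_decomposition).
   - Inside S :&: G_lam, filtered by the layers L_k = S :&: Ker (A - lam)^k,
     every vector of L_k is spanned modulo L_(k-1) by generators of special
     Jordan chains of length k lying in S (span_special_tops).  A non-special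
     chain is split into two chains synchronizing strictly more pairs of
     cells; the Perron property of regular networks (a constant vector is
     never the top of a chain of length >= 2) drives this step.
   - Selecting these generators greedily layer by layer and counting
     dimensions with the convexity of k |-> dim L_k yields a family of
     special Jordan subspaces spanning S :&: G_lam of total dimension at most
     dim (S :&: G_lam) (eigen_special_cover).  Gathering all eigenvalues
     gives such a family for S itself, which is then a direct sum. *)

(* Weighted layer count: if a nat sequence d with d 0 = 0 is concave up to
   the corrections a k, i.e. a k + d (k-1) + d (k+1) <= 2 d k below P and
   a P + d (P-1) <= d P at the top, then sum_(k = 1..P) k * a k <= d P.
   Applied to d k = dim of the k-th layer of a generalized eigenspace and
   a k = number of Jordan chains of length k, it bounds their total size. *)
Lemma weighted_layer_count (a d : nat -> nat) (P : nat) : 0 < P -> d 0 = 0 ->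
  (forall k, 0 < k < P -> a k + d k.-1 + d k.+1 <= 2 * d k) ->
  a P + d P.-1 <= d P ->
  \sum_(1 <= k < P.+1) k * a k <= d P.
Proof.
move=> P_gt0 d0 a_mid a_top.
have partial j : j < P ->
    \sum_(1 <= k < j.+1) k * a k + j * d j.+1 <= j.+1 * d j.
  elim: j => [|j IHj] jP; first by rewrite big_geq // d0.
  rewrite big_nat_recr //=.
  have := IHj (ltnW jP); have := a_mid j.+1; rewrite ltn0Sn jP => /(_ isT) /=.
  set s := \sum_(1 <= k < j.+1) k * a k; nia.
rewrite -(prednK P_gt0) big_nat_recr //= prednK //.
have := partial P.-1; rewrite ltn_predL prednK // => /(_ P_gt0).
set s := \sum_(1 <= k < P) k * a k; move: a_top; nia.
Qed.

Local Open Scope ring_scope.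

Section Polydiagonals.
Variables (R : numClosedFieldType) (n : nat).
Implicit Types (m : nat) (z : 'rV[R]_n) (r : {set 'I_n * 'I_n}).

Lemma diag_pairE z i j : (z *m diag_pair R i j) 0 0 = z 0 i - z 0 j.
Proof.
have pick (F : 'I_n -> R) l : \sum_k F k * (k == l)%:R = F l.
  by rewrite (bigD1 l) //= eqxx mulr1 big1 ?addr0 // => k /negPf->; rewrite mulr0.
rewrite !mxE; under eq_bigr => k _ do rewrite !mxE mulrBr.
by rewrite sumrB !pick.
Qed.

Lemma sub_kermx_diag_pair z i j :
  (z <= kermx (diag_pair R i j))%MS = (z 0 i == z 0 j).
Proof.
apply/sub_kermxP/eqP => [zK|zij].
  by apply/eqP; rewrite -subr_eq0 -diag_pairE zK mxE.
by apply/matrixP => a b; rewrite !ord1 diag_pairE zij subrr mxE.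
Qed.

Definition syncpairs m (W : 'M[R]_(m, n)) : {set 'I_n * 'I_n} :=
  [set p | (W <= kermx (diag_pair R p.1 p.2))%MS].

Lemma syncpairsE m (W : 'M[R]_(m, n)) i j :
  ((i, j) \in syncpairs W) = [forall k, W k i == W k j].
Proof.
rewrite inE /=; apply/row_subP/forallP => Wij k.
  by have := Wij k; rewrite sub_kermx_diag_pair !mxE.
by rewrite sub_kermx_diag_pair !mxE; apply: Wij.
Qed.

Lemma sub_polydiag m (W : 'M[R]_(m, n)) r :
  (W <= polydiag R r)%MS = (r \subset syncpairs W).
Proof.
apply/sub_bigcapmxP/subsetP => Wr p rp; first by rewrite inE; apply: Wr.
by have := Wr p rp; rewrite inE.
Qed.

Lemma polydiag_anti r r' : r \subset r' -> (polydiag R r' <= polydiag R r)%MS.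
Proof. by move=> rr'; rewrite sub_polydiag (subset_trans rr') // -sub_polydiag. Qed.

Lemma Pclos_syncpairs (W : 'M[R]_n) : (Pclos W :=: polydiag R (syncpairs W))%MS.
Proof.
apply/eqmxP/andP; split.
  by apply: (bigcapmx_inf (syncpairs W)) => //; rewrite sub_polydiag.
by apply/sub_bigcapmxP => r; rewrite sub_polydiag; apply: polydiag_anti.
Qed.

Lemma syncpairs_eqmx m1 m2 (W : 'M[R]_(m1, n)) (W' : 'M[R]_(m2, n)) :
  (W :=: W')%MS -> syncpairs W = syncpairs W'.
Proof. by move=> eqW; apply/setP => p; rewrite !inE eqW. Qed.

Lemma syncpairs_anti m1 m2 (W : 'M[R]_(m1, n)) (W' : 'M[R]_(m2, n)) :
  (W <= W')%MS -> syncpairs W' \subset syncpairs W.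
Proof. by move=> sWW'; apply/subsetP => p; rewrite !inE; apply: submx_trans. Qed.

Lemma sub_Pclos (W : 'M[R]_n) : (W <= Pclos W)%MS.
Proof. by rewrite Pclos_syncpairs sub_polydiag. Qed.

Lemma Pclos_min (W : 'M[R]_n) r : (W <= polydiag R r)%MS -> (Pclos W <= polydiag R r)%MS.
Proof. by move=> Wr; apply: bigcapmx_inf Wr _. Qed.

Lemma Pclos_sub_syncpairs (U W : 'M[R]_n) :
  (Pclos U <= Pclos W)%MS -> syncpairs W \subset syncpairs U.
Proof.
by move=> sUW; rewrite -sub_polydiag -Pclos_syncpairs (submx_trans (sub_Pclos U)).
Qed.

Lemma syncpairs_eq_Pclos (U W : 'M[R]_n) :
  syncpairs U = syncpairs W -> (Pclos U == Pclos W)%MS.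
Proof.
move=> eUW; apply/eqmxP; apply: eqmx_trans (Pclos_syncpairs U) _.
by rewrite eUW; apply: eqmx_sym (Pclos_syncpairs W).
Qed.

Lemma constant_Fsync z : z != 0 -> (forall i j, z 0 i = z 0 j) -> (z :=: Fsync R n)%MS.
Proof.
move=> /rV0Pn [i1 zi1] z_const.
apply/eqmxP/andP; split.
  by rewrite sub_polydiag; apply/subsetP => p _; rewrite inE sub_kermx_diag_pair (z_const p.1 p.2).
apply/row_subP => a; set y := row a _.
have y_const i j : y 0 i = y 0 j.
  have := row_sub a (Fsync R n); rewrite -/y sub_polydiag => /subsetP/(_ (i, j)).
  by rewrite !inE sub_kermx_diag_pair => /(_ isT)/eqP.
have -> : y = (y 0 i1 / z 0 i1) *: z.
  by apply/rowP => b; rewrite [RHS]mxE (z_const b i1) -mulrA mulVf // mulr1 (y_const b i1).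
exact: scalemx_sub.
Qed.

End Polydiagonals.

(* The chain of a vector u under a matrix N: the rows of chainmx N k u are
   u N^(k-1), ..., u N, u (row 0 is the "top" u N^(k-1)). *)
Section ChainSpaces.
Variables (F : fieldType) (n : nat) (N : 'M[F]_n).
Implicit Types (k j : nat) (u z : 'rV[F]_n).

Definition chainmx k u : 'M[F]_(k, n) := \matrix_(i < k) (u *m N ^+ (k.-1 - i)).
Definition chain_space k u : 'M[F]_n := <<chainmx k u>>%MS.

Lemma chain_spaceE k u : (chain_space k u :=: chainmx k u)%MS.
Proof. exact: genmxE. Qed.

Lemma row_chainmx k u i : row i (chainmx k u) = u *m N ^+ (k.-1 - i).
Proof. by rewrite rowK. Qed.

Lemma chainmxE k u (i : 'I_k) b : chainmx k u i b = (u *m N ^+ (k.-1 - i)) 0 b.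
Proof. by rewrite -row_chainmx [RHS]mxE. Qed.

Lemma pow_vanish_ge k j u : u *m N ^+ k = 0 -> (k <= j)%N -> u *m N ^+ j = 0.
Proof. by move=> uk kj; rewrite -(subnKC kj) exprD mulmxA uk mul0mx. Qed.

Lemma chainmx_pow k u j : (j < k)%N -> (u *m N ^+ j <= chainmx k u)%MS.
Proof.
move=> jk; have ik : (k.-1 - j < k)%N by lia.
rewrite (_ : u *m N ^+ j = row (Ordinal ik) (chainmx k u)) ?row_sub //.
by rewrite row_chainmx /=; congr (_ *m _ ^+ _); lia.
Qed.

Lemma chainmx_stable k u : u *m N ^+ k = 0 -> (chainmx k u *m N <= chainmx k u)%MS.
Proof.
move=> uk; apply/row_subP => i; rewrite row_mul row_chainmx -mulmxA mulmxE -exprSr.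
case: (ltnP (k.-1 - i).+1 k) => ik; first exact: chainmx_pow.
by rewrite (pow_vanish_ge uk ik) sub0mx.
Qed.

Lemma chainmx_annihilated k u : u *m N ^+ k = 0 -> chainmx k u *m N ^+ k = 0.
Proof.
move=> uk; apply/row_matrixP => i.
by rewrite row_mul row_chainmx row0 -mulmxA mulmxE -exprD (pow_vanish_ge uk) ?leq_addl.
Qed.

Lemma stable_pow_sub m (V : 'M[F]_(m, n)) z j :
  (V *m N <= V)%MS -> (z <= V)%MS -> (z *m N ^+ j <= V)%MS.
Proof.
move=> VN zV; elim: j => [|j IHj]; first by rewrite expr0 mulmx1.
by rewrite exprSr mulmxA (submx_trans (submxMr _ IHj)).
Qed.

Lemma chainmx_sub k u m (V : 'M[F]_(m, n)) :
  (V *m N <= V)%MS -> (u <= V)%MS -> (chainmx k u <= V)%MS.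
Proof. by move=> VN uV; apply/row_subP => i; rewrite row_chainmx stable_pow_sub. Qed.

Lemma chainmxB k u z : chainmx k (u - z) = chainmx k u - chainmx k z.
Proof.
by apply/row_matrixP => i; rewrite linearB /= !row_chainmx mulmxBl.
Qed.

Lemma rank_chain_space k u : (\rank (chain_space k u) <= k)%N.
Proof. by rewrite chain_spaceE rank_leq_row. Qed.

(* A chain whose top u N^(k-1) is nonzero is linearly independent: applying
   N^i to a relation whose last nonzero coefficient is at row i leaves a
   nonzero multiple of the top. *)
Lemma chainmx_free k u : u *m N ^+ k = 0 -> u *m N ^+ k.-1 != 0 ->
  row_free (chainmx k u).
Proof.
move=> uk top_neq0; rewrite -kermx_eq0; apply/rowV0P => w /sub_kermxP wK.
apply/eqP; apply: contraNT top_neq0 => w_neq0.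
have [i1 wi1] := rV0Pn _ w_neq0.
pose i0 := [arg max_(i > i1 | w 0 i != 0) i].
have [wi0 i0_max] : w 0 i0 != 0 /\ forall i, w 0 i != 0 -> (i <= i0)%N.
  rewrite /i0; case: (@arg_maxnP _ i1 (fun i => w 0 i != 0) (fun i => nat_of_ord i) wi1).
  by move=> i wi i_max; split => // l /i_max.
have : (w *m chainmx k u) *m N ^+ i0 = w 0 i0 *: (u *m N ^+ k.-1).
  rewrite [w *m _]mulmx_sum_row mulmx_suml (bigD1 i0) //= big1 ?addr0.
    have := ltn_ord i0; rewrite row_chainmx -scalemxAl -mulmxA mulmxE -exprD.
    by move=> i0k; rewrite subnK //; lia.
  move=> i ii0; rewrite row_chainmx -scalemxAl -mulmxA mulmxE -exprD.
  have [->|wi] := eqVneq (w 0 i) 0; first by rewrite scale0r.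
  have := i0_max i wi; rewrite leq_eqVlt => /orP[/eqP/val_inj ei|lt_i_i0].
    by rewrite ei eqxx in ii0.
  by have := ltn_ord i; rewrite (pow_vanish_ge uk) ?scaler0 //; lia.
by rewrite wK mul0mx => /esym/eqP; rewrite scalemx_eq0 (negPf wi0).
Qed.

Lemma rank_chainmx k u : u *m N ^+ k = 0 -> u *m N ^+ k.-1 != 0 ->
  \rank (chainmx k u) = k.
Proof. by move=> uk top; apply/eqP; apply: chainmx_free. Qed.

(* The coefficients of w
   on u N^l are found one at a time, from the top of the chain of x down. *)
Lemma chain_separate k u (x : 'rV[F]_n) (i j : 'I_n) : u *m N ^+ k = 0 ->
  (u *m N ^+ k.-1) 0 i != (u *m N ^+ k.-1) 0 j ->
  exists2 w, (w <= chainmx k u)%MS &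
    forall m, (m < k)%N -> ((x - w) *m N ^+ m) 0 i = ((x - w) *m N ^+ m) 0 j.
Proof.
move=> uk top_ij.
pose delta z := z 0 i - z 0 j.
have delta_top : delta (u *m N ^+ k.-1) != 0 by rewrite /delta subr_eq0.
suff fixed l : (l <= k)%N -> exists2 w, (w <= chainmx k u)%MS &
    forall m, (k - l <= m < k)%N -> delta ((x - w) *m N ^+ m) = 0.
  have [w wu fix_w] := fixed k (leqnn k); exists w => // m mk.
  by apply/eqP; rewrite -subr_eq0; apply/eqP/fix_w; lia.
elim: l => [|l IHl] lk; first by exists 0; [rewrite sub0mx | lia].
have [w wu fix_w] := IHl (ltnW lk); set m0 := (k - l.+1)%N.
pose c := delta ((x - w) *m N ^+ m0) / delta (u *m N ^+ k.-1).
exists (w + c *: (u *m N ^+ l)); first by rewrite addmx_sub // scalemx_sub // chainmx_pow.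
move=> m /andP[m_ge m_lt]; rewrite opprD addrA mulmxBl -scalemxAl -mulmxA mulmxE -exprD.
have delta_scale z1 z2 a : delta (z1 - a *: z2) = delta z1 - a * delta z2.
  by rewrite /delta !mxE; ring.
rewrite delta_scale; have [->|m_ne] := eqVneq m m0.
  by rewrite (_ : (l + m0 = k.-1)%N) ?divfK ?subrr //; lia.
rewrite (pow_vanish_ge uk (j := (l + m)%N)); last lia.
rewrite fix_w; last lia.
by rewrite /delta !mxE subrr mulr0 subrr.
Qed.

End ChainSpaces.

Section JordanSubspaces.
Variables (R : numClosedFieldType) (n : nat) (A : 'M[nat]_n).

Definition shift_adj (lam : R) : 'M[R]_n := adjR R A - lam%:M.
Local Notation N := shift_adj.

Lemma chain_space_jordan lam k (u : 'rV[R]_n) : (0 < k)%N -> u *m N lam ^+ k = 0 ->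
  u *m N lam ^+ k.-1 != 0 -> is_jordan_subspace A lam (chain_space (N lam) k u).
Proof.
move=> k_gt0 uk top_neq0.
exists k, (fun i => u *m N lam ^+ (k.-1 - i)); split => //; last exact/eqmxP/genmxE.
split => [i ik||i ik].
- by apply: contraNneq top_neq0 => ui0; apply/eqP/(pow_vanish_ge ui0); rewrite leq_subr.
- by rewrite subn0 -mulmxA mulmxE -exprSr prednK.
- by rewrite -mulmxA mulmxE -exprSr; congr (_ *m _ ^+ _); lia.
Qed.

Lemma jordan_chain_space lam U : is_jordan_subspace A lam U -> exists k u,
  [/\ (0 < k)%N, u *m N lam ^+ k = 0, u *m N lam ^+ k.-1 != 0 &
      (U :=: chainmx (N lam) k u)%MS].
Proof.
case=> k [x [k_gt0 [x_neq0 x0 xS] /eqmxP eqU]]; set u := x k.-1.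
have xE j : (j < k)%N -> x (k.-1 - j)%N = u *m N lam ^+ j.
  elim: j => [|j IHj] jk; first by rewrite subn0 expr0 mulmx1.
  rewrite exprSr -mulmxE mulmxA -IHj; last lia.
  by rewrite (_ : (k.-1 - j = (k.-1 - j.+1).+1)%N) ?xS //; lia.
have top : u *m N lam ^+ k.-1 = x 0%N by rewrite -xE ?subnn // prednK.
exists k, u; split => //.
- by rewrite -(prednK k_gt0) exprSr mulmxA top x0.
- by rewrite top x_neq0.
apply: eqmx_trans eqU _.
suff -> : \matrix_(i < k) x i = chainmx (N lam) k u by [].
apply/row_matrixP => i; rewrite row_chainmx rowK -xE; last lia.
by congr (x _); have := ltn_ord i; lia.
Qed.

Lemma special_stable W : is_special A W -> (W *m adjR R A <= W)%MS.
Proof.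
case=> lam [/jordan_chain_space [k [u [_ uk _ eqW]]] _].
have -> : adjR R A = N lam + lam%:M by rewrite subrK.
by rewrite (eqmx_stable _ eqW) stablemxD ?stablemxC // chainmx_stable.
Qed.

End JordanSubspaces.

Lemma real_argmax (R : numDomainType) (I : finType) (f : I -> R) (i0 : I) :
  (forall i, f i \is Num.real) -> exists i, forall j, f j <= f i.
Proof.
move=> f_real; suff [i i_max] : exists i, forall j, j \in i0 :: enum I -> f j <= f i.
  by exists i => j; apply: i_max; rewrite inE mem_enum orbT.
elim: (enum I) => [|y s [i i_max]]; first by exists i0 => j; rewrite inE => /eqP->.
have [fyi|fiy] := orP (real_leVge (f_real y) (f_real i)).
  exists i => j; rewrite !inE => /or3P[/eqP->|/eqP->|js] //.
    by rewrite i_max ?mem_head.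
  by rewrite i_max // inE js orbT.
exists y => j; rewrite !inE => /or3P[/eqP->|/eqP->|js] //.
  by rewrite (le_trans _ fiy) // i_max ?mem_head.
by rewrite (le_trans _ fiy) // i_max // inE js orbT.
Qed.

(* A constant eigenvector c
   forces lam = v (all row sums are v); then w (A - v I) = c with
   y = Re (w / c) gives sum_j a_ij y_j - v y_i = 1 for every cell i, which
   fails at a cell where y is maximal. *)
Section RegularNetwork.
Variables (R : numClosedFieldType) (n v : nat) (A : 'M[nat]_n).
Hypothesis hA : regular_network A v.
Local Notation N := (shift_adj A).

Lemma shift_adj_entry lam (z : 'rV[R]_n) i :
  (z *m N lam) 0 i = \sum_j z 0 j * (A i j)%:R - lam * z 0 i.
Proof.
rewrite mulmxBr mul_mx_scalar !mxE; congr (_ - _).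
by apply: eq_bigr => j _; rewrite !mxE.
Qed.

Lemma row_sum_adj i : \sum_j (A i j)%:R = v%:R :> R.
Proof. by rewrite -natr_sum hA. Qed.

Lemma no_superharmonic_real (y : 'I_n -> R) (i0 : 'I_n) : (forall j, y j \is Num.real) ->
  ~ (forall i, \sum_j y j * (A i j)%:R - y i * v%:R = 1).
Proof.
move=> y_real y_eq; have [imax y_max] := real_argmax i0 y_real.
have : \sum_j y j * (A imax j)%:R <= y imax * v%:R.
  rewrite -(row_sum_adj imax) mulr_sumr; apply: ler_sum => j _.
  by rewrite mulrC [_ * (_)%:R]mulrC ler_wpM2l ?ler0n.
by rewrite -subr_le0 y_eq ler10.
Qed.

Lemma constant_top_vanishes lam (w : 'rV[R]_n) :
  (w *m N lam) *m N lam = 0 -> (forall i j, (w *m N lam) 0 i = (w *m N lam) 0 j) ->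
  w *m N lam = 0.
Proof.
move=> topN top_const.
have [c1 c1E] : {c1 | w *m N lam = c1} by exists (w *m N lam).
rewrite c1E in topN top_const *.
apply/eqP; apply: contraT => c1_neq0; exfalso.
have [i0 ci0] := rV0Pn _ c1_neq0.
set c := c1 0 i0 in ci0; have cE i : c1 0 i = c by rewrite /c (top_const i i0).
have lam_v : lam = v%:R.
  have : (c1 *m N lam) 0 i0 = 0 by rewrite topN mxE.
  rewrite shift_adj_entry; under eq_bigr => j _ do rewrite cE.
  rewrite -mulr_sumr row_sum_adj [lam * _]mulrC -mulrBr => /eqP.
  by rewrite mulf_eq0 (negPf ci0) subr_eq0 => /eqP.
apply: (@no_superharmonic_real (fun j => 'Re (w 0 j / c)) i0 (fun j => Creal_Re _)) => i.
have := congr1 (fun z : 'rV_n => 'Re (z 0 i / c)) c1E.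
rewrite /= shift_adj_entry cE lam_v divff // (Creal_ReP _ (rpred1 _)) => Re1.
apply: etrans Re1.
rewrite mulrBl raddfB /= mulr_suml raddf_sum /=; congr (_ - _).
  by apply: eq_bigr => j _; rewrite mulrAC [RHS]ReMr ?realn.
by rewrite -mulrA [RHS]ReMl ?realn // mulrC.
Qed.

Lemma constant_chain_top lam k (u : 'rV[R]_n) : (1 < k)%N -> u *m N lam ^+ k = 0 ->
  (forall i j, (u *m N lam ^+ k.-1) 0 i = (u *m N lam ^+ k.-1) 0 j) ->
  u *m N lam ^+ k.-1 = 0.
Proof.
move=> k_gt1 uk top_const.
have topE : u *m N lam ^+ k.-1 = (u *m N lam ^+ k.-2) *m N lam.
  by rewrite -mulmxA mulmxE -exprSr; congr (_ *m _ ^+ _); lia.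
rewrite topE in top_const *; apply: constant_top_vanishes top_const.
by rewrite -topE -mulmxA mulmxE -exprSr prednK // ltnW.
Qed.

End RegularNetwork.

Section SeqSums.
Variables (F : fieldType) (n : nat).

Definition span_seq (s : seq 'rV[F]_n) : 'M[F]_n := (\sum_(t <- s) <<t>>)%MS.

Lemma sub_sums_seq (I : eqType) (s : seq I) (G : I -> 'M[F]_n) i m (X : 'M[F]_(m, n)) :
  i \in s -> (X <= G i)%MS -> (X <= \sum_(j <- s) G j)%MS.
Proof.
elim: s => // a s IHs; rewrite inE big_cons => /orP[/eqP<-|i_s] XG.
  exact: submx_trans XG (addsmxSl _ _).
exact: submx_trans (IHs i_s XG) (addsmxSr _ _).
Qed.

Lemma sums_seq_sub (I : eqType) (s : seq I) (G : I -> 'M[F]_n) m (Y : 'M[F]_(m, n)) :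
  (forall i, i \in s -> (G i <= Y)%MS) -> (\sum_(j <- s) G j <= Y)%MS.
Proof.
elim: s => [|a s IHs] GY; first by rewrite big_nil sub0mx.
rewrite big_cons addsmx_sub GY ?mem_head //= IHs // => i i_s.
by rewrite GY // inE i_s orbT.
Qed.

Lemma sums_seq_stable (I : eqType) (s : seq I) (G : I -> 'M[F]_n) (B : 'M[F]_n) :
  (forall i, i \in s -> (G i *m B <= G i)%MS) ->
  ((\sum_(j <- s) G j)%MS *m B <= \sum_(j <- s) G j)%MS.
Proof.
elim: s => [|a s IHs] GB; first by rewrite big_nil mul0mx sub0mx.
rewrite big_cons addsmxMr addsmxS ?GB ?mem_head // IHs // => i i_s.
by rewrite GB // inE i_s orbT.
Qed.

End SeqSums.

(* A vector x
   whose chain is not special is split as x = w + (x - w), where the chains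
   of w and x - w synchronize strictly more pairs of cells than that of x;
   induction on the number of non-synchronized pairs concludes. *)
Section SpecialTops.
Variables (R : numClosedFieldType) (n v : nat) (A : 'M[nat]_n).
Hypothesis hA : regular_network A v.
Variables (lam : R) (S : 'M[R]_n) (r0 : {set 'I_n * 'I_n}).
Hypothesis S_stable : (S *m adjR R A <= S)%MS.
Hypothesis S_polydiag : (S == polydiag R r0)%MS.
Local Notation N := (shift_adj A lam).
Local Notation sync k x := (syncpairs (chainmx N k x)).

Definition layer j : 'M[R]_n := (S :&: kermx (N ^+ j))%MS.

Definition special_top k (t : 'rV[R]_n) : Prop :=
  [/\ (t <= S)%MS, t *m N ^+ k = 0, t *m N ^+ k.-1 != 0 &
      is_special A (chain_space N k t)].

Lemma S_stable_shift : (S *m N <= S)%MS.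
Proof. by rewrite stablemxD ?stablemxN ?stablemxC. Qed.

(* A Jordan chain other than F has a non-constant top: for length 1 the chain
   spans its top, and a constant top spans F; for length >= 2 use the
   Perron property. *)
Lemma chain_top_nonconstant k u : (0 < k)%N -> u *m N ^+ k = 0 ->
  u *m N ^+ k.-1 != 0 -> ~~ (chainmx N k u == Fsync R n)%MS ->
  exists i j, (u *m N ^+ k.-1) 0 i != (u *m N ^+ k.-1) 0 j.
Proof.
move=> k_gt0 uk top_u chain_neqF; apply: NNPP => top_const.
have {}top_const i j : (u *m N ^+ k.-1) 0 i = (u *m N ^+ k.-1) 0 j.
  by apply/eqP; apply: NNPP => ij; apply: top_const; exists i, j; apply/negP.
have [k_gt1|] := ltnP 1 k.
  by case/negP: top_u; apply/eqP; apply: (constant_chain_top hA k_gt1 uk).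
rewrite leq_eqVlt ltnS leqn0 (negPf (lt0n_neq0 k_gt0)) orbF => /eqP k1; subst k.
case/negP: chain_neqF; apply/eqmxP; apply: eqmx_trans (constant_Fsync top_u top_const).
apply/eqmxP/andP; split; first by apply/row_subP => i; rewrite row_chainmx (ord1 i).
exact: (@chainmx_pow _ _ N 1 u 0%N isT).
Qed.

Lemma nonspecial_witness k x : (0 < k)%N -> (x <= S)%MS -> x *m N ^+ k = 0 ->
  x *m N ^+ k.-1 != 0 -> ~ is_special A (chain_space N k x) ->
  exists u, [/\ (u <= S)%MS, u *m N ^+ k = 0, sync k x \proper sync k u &
    exists i j, (u *m N ^+ k.-1) 0 i != (u *m N ^+ k.-1) 0 j].
Proof.
move=> k_gt0 xS xk top_x not_special; set X := chain_space N k x.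
have [U [jU rkU PUX PU_neq U_neqF]] : exists U, [/\ is_jordan_subspace A lam U,
    \rank U = \rank X, (Pclos U <= Pclos X)%MS, ~~ (Pclos U == Pclos X)%MS &
    ~~ (U == Fsync R n)%MS].
  apply: NNPP => noU; apply: not_special; exists lam; split.
    exact: chain_space_jordan.
  move=> U jU rkU PUX; have [|U_neqF] := boolP (U == Fsync R n)%MS; first by right.
  by left; apply: contraT => PU_neq; case: noU; exists U.
have [k' [u [_ uk top_u eqU]]] := jordan_chain_space jU.
have ek : k' = k.
  by rewrite -(rank_chainmx uk top_u) -eqU rkU chain_spaceE rank_chainmx.
subst k'; exists u.
have sync_sub : sync k x \subset sync k u.
  rewrite -(syncpairs_eqmx eqU) -(syncpairs_eqmx (chain_spaceE _ _ _)).
  exact: Pclos_sub_syncpairs.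
have PXS : (Pclos X <= S)%MS.
  rewrite (eqmxP S_polydiag) Pclos_min // -(eqmxP S_polydiag) chain_spaceE.
  exact: chainmx_sub S_stable_shift xS.
split => //.
- have := @chainmx_pow _ _ N k u 0%N k_gt0; rewrite expr0 mulmx1 -eqU => uU.
  exact: submx_trans (submx_trans uU (sub_Pclos U)) (submx_trans PUX PXS).
- rewrite properEneq sync_sub andbT; apply: contra PU_neq => /eqP sync_eq.
  by rewrite syncpairs_eq_Pclos // (syncpairs_eqmx eqU) (syncpairs_eqmx (chain_spaceE N k x)).
apply: chain_top_nonconstant => //; apply: contra U_neqF => /eqmxP chain_F.
by apply/eqmxP; apply: eqmx_trans eqU chain_F.
Qed.

(* Splitting a non-special chain: with u as in nonspecial_witness, correct x
   by some w in the chain of u (chain_separate) so that the chain of x - w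
   synchronizes a pair (i, j) that the chain of x does not. *)
Lemma nonspecial_split k x : (0 < k)%N -> (x <= S)%MS -> x *m N ^+ k = 0 ->
  x *m N ^+ k.-1 != 0 -> ~ is_special A (chain_space N k x) ->
  exists w, [/\ (w <= S)%MS, w *m N ^+ k = 0, sync k x \proper sync k w &
                sync k x \proper sync k (x - w)].
Proof.
move=> k_gt0 xS xk top_x not_special.
have [u [uS uk sync_xu [i [j top_ij]]]] := nonspecial_witness k_gt0 xS xk top_x not_special.
have [w wu w_sep] := chain_separate x uk top_ij.
have u_chain : (chainmx N k u <= S)%MS by apply: chainmx_sub S_stable_shift uS.
have w_chain : (chainmx N k w <= chainmx N k u)%MS by apply: chainmx_sub (chainmx_stable uk) wu.
have wk : w *m N ^+ k = 0.
  by case/submxP: wu => D ->; rewrite -mulmxA chainmx_annihilated // mulmx0.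
exists w; split => //; first exact: submx_trans wu u_chain.
  exact: proper_sub_trans sync_xu (syncpairs_anti w_chain).
have sync_sub : sync k x \subset sync k (x - w).
  apply/subsetP => p p_x; have p_u := subsetP (proper_sub sync_xu) p p_x.
  move: p_x p_u; rewrite !inE chainmxB => x_p u_p.
  by rewrite addmx_sub // eqmx_opp (submx_trans w_chain).
apply/properP; split => //; exists (i, j).
  rewrite syncpairsE; apply/forallP => a; rewrite !chainmxE; apply/eqP/w_sep.
  by rewrite (leq_ltn_trans (leq_subr _ _)) // ltn_predL.
apply/negP => /(subsetP (proper_sub sync_xu)); rewrite syncpairsE => /forallP /(_ (Ordinal k_gt0)).
by rewrite !chainmxE subn0 (negPf top_ij).
Qed.

Lemma span_special_tops k (x : 'rV[R]_n) : (0 < k)%N -> (x <= S)%MS -> x *m N ^+ k = 0 ->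
  exists s, (forall t, t \in s -> special_top k t) /\ (x <= layer k.-1 + span_seq s)%MS.
Proof.
move=> k_gt0; have [m] := ubnP #|~: sync k x|; elim: m x => // m IHm x lt_m xS xk.
have [top_x0|top_x] := eqVneq (x *m N ^+ k.-1) 0.
  exists [::]; split => //; apply: submx_trans (addsmxSl _ _).
  by rewrite sub_capmx xS; apply/sub_kermxP.
have [is_sp|not_sp] := classic (is_special A (chain_space N k x)).
  exists [:: x]; split; first by move=> t; rewrite inE => /eqP->.
  by apply: submx_trans (addsmxSr _ _); rewrite /span_seq big_seq1 genmxE.
have [w [wS wk sync_w sync_xw]] := nonspecial_split k_gt0 xS xk top_x not_sp.
have smaller y : sync k x \proper sync k y -> (#|~: sync k y| < m)%N.
  by rewrite -properC => /proper_card lt_y; apply: leq_trans lt_y _; rewrite -ltnS.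
have [sw [sw_sp x_sw]] := IHm w (smaller w sync_w) wS wk.
have xwS : (x - w <= S)%MS by rewrite addmx_sub // eqmx_opp.
have xwk : (x - w) *m N ^+ k = 0 by rewrite mulmxBl xk wk subrr.
have [sxw [sxw_sp x_sxw]] := IHm (x - w) (smaller _ sync_xw) xwS xwk.
exists (sw ++ sxw); split => [t|]; first by rewrite mem_cat => /orP[/sw_sp|/sxw_sp].
have -> : x = w + (x - w) by rewrite addrC subrK.
rewrite /span_seq big_cat /=; apply: submx_trans (addmx_sub_adds x_sw x_sxw) _.
rewrite !addsmx_sub addsmxSl /span_seq /=.
by apply/andP; split; apply: (submx_trans _ (addsmxSr _ _)); rewrite ?addsmxSl ?addsmxSr.
Qed.

End SpecialTops.

Lemma select_spanning (F : fieldType) (n : nat) (P : 'rV[F]_n -> Prop) (Y Z : 'M[F]_n) :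
  (Y <= Z)%MS -> (forall t, P t -> (t <= Z)%MS) ->
  (forall z : 'rV[F]_n, (z <= Z)%MS ->
     exists s, (forall t, t \in s -> P t) /\ (z <= Y + span_seq s)%MS) ->
  exists T, [/\ forall t, t \in T -> P t, (size T + \rank Y <= \rank Z)%N &
             (Z <= Y + span_seq T)%MS].
Proof.
move=> YZ PZ Z_span; have [m] := ubnP (\rank Z - \rank Y)%N.
elim: m Y YZ Z_span => // m IHm Y YZ Z_span lt_m.
have [ZY|/row_subPn [a Za_notY]] := boolP (Z <= Y)%MS.
  by exists [::]; rewrite add0n mxrankS //; split => //; apply: submx_trans ZY (addsmxSl _ _).
have [s [Ps Za_s]] := Z_span _ (row_sub a Z).
have [t t_s tY] : exists2 t, t \in s & ~~ (t <= Y)%MS.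
  apply: NNPP => all_Y; case/negP: Za_notY; apply: submx_trans Za_s _.
  rewrite addsmx_sub submx_refl; apply: sums_seq_sub => t t_s; rewrite genmxE.
  by apply: contraT => tY; case: all_Y; exists t.
have Pt := Ps t t_s.
have Y'Z : ((Y + t)%MS <= Z)%MS by rewrite addsmx_sub YZ PZ.
have rkY' : (\rank Y < \rank (Y + t)%MS)%N.
  rewrite rank_ltmx // ltmxE addsmxSl /=; apply: contra tY.
  exact: submx_trans (addsmxSr _ _).
have Z_span' (z : 'rV[F]_n) : (z <= Z)%MS ->
    exists s, (forall t, t \in s -> P t) /\ (z <= (Y + t) + span_seq s)%MS.
  move=> /Z_span [s' [Ps' zs']]; exists s'; split => //.
  by apply: submx_trans zs' _; rewrite addsmxS ?addsmxSl.
have [|T [PT size_T ZT]] := IHm _ Y'Z Z_span'; first by have := mxrankS Y'Z; lia.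
exists (t :: T); split => [t'|/=|].
- by rewrite inE => /orP[/eqP->|/PT].
- by move: size_T rkY' => le_T lt_Y; rewrite addSnnS (leq_trans _ le_T) // leq_add2l.
apply: submx_trans ZT _; rewrite /span_seq big_cons -addsmxA addsmxS //.
by rewrite addsmxS ?genmxE.
Qed.

Definition special_cover (R : numClosedFieldType) (n : nat) (A : 'M[nat]_n)
    (S X : 'M[R]_n) (Js : seq 'M[R]_n) : Prop :=
  [/\ forall J, J \in Js -> is_special A J /\ (J <= S)%MS,
      (X <= \sum_(J <- Js) J)%MS & (\sum_(J <- Js) \rank J <= \rank X)%N].

Section Layers.
Variables (R : numClosedFieldType) (n : nat) (A : 'M[nat]_n).
Variables (lam : R) (S : 'M[R]_n).
Hypothesis S_stable : (S *m adjR R A <= S)%MS.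
Local Notation N := (shift_adj A lam).
Local Notation L := (layer A lam S).

Lemma sub_layer m (X : 'M[R]_(m, n)) j : (X <= L j)%MS = (X <= S)%MS && (X *m N ^+ j == 0).
Proof. by rewrite sub_capmx sub_kermx. Qed.

Lemma layer_sub j : (L j <= S)%MS.
Proof. exact: capmxSl. Qed.

Lemma layer_annihilated j : L j *m N ^+ j = 0.
Proof. by apply/eqP; rewrite -sub_kermx capmxSr. Qed.

Lemma layer_mono j : (L j <= L j.+1)%MS.
Proof. by rewrite sub_layer layer_sub exprSr -mulmxE mulmxA layer_annihilated mul0mx eqxx. Qed.

Lemma layer_shift j : (L j.+1 *m N <= L j)%MS.
Proof.
rewrite sub_layer (submx_trans (submxMr _ (layer_sub _)) (S_stable_shift lam S_stable)) /=.
by rewrite -mulmxA (_ : N *m N ^+ j = N ^+ j.+1) ?layer_annihilated // exprS mulmxE.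
Qed.

Lemma layer0_sub m (X : 'M[R]_(m, n)) : (L 0 <= X)%MS.
Proof. by have := layer_annihilated 0; rewrite expr0 mulmx1 => ->; apply: sub0mx. Qed.

(* Convexity of layer ranks: dim L_(k-1) + dim L_(k+1) is at most
   dim L_k + dim (L_(k-1) + L_(k+1) N).  It follows from the rank-nullity
   formula for N on L_k and L_(k+1) and the modular law. *)
Lemma layer_rank_convex k : (0 < k)%N ->
  (\rank (L k.-1) + \rank (L k.+1) <= \rank (L k.-1 + L k.+1 *m N)%MS + \rank (L k))%N.
Proof.
move=> k_gt0.
have rk_sum := mxrank_sum_cap (L k.-1) (L k.+1 *m N).
have rk_next := mxrank_mul_ker (L k.+1) N.
have rk_cur := mxrank_mul_ker (L k) N.
have ker_next : (\rank (L k.+1 :&: kermx N) <= \rank (L k :&: kermx N))%N.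
  apply: mxrankS; rewrite sub_capmx capmxSr andbT sub_layer.
  rewrite (submx_trans (capmxSl _ _) (layer_sub _)) /= -(prednK k_gt0) exprS.
  by rewrite -mulmxE mulmxA (sub_kermxP (capmxSr _ _)) mul0mx.
have cap_img : (\rank (L k.-1 :&: L k.+1 *m N) <= \rank (L k *m N))%N.
  have /submxP [D eD] := capmxSr (L k.-1) (L k.+1 *m N).
  rewrite mxrankS // eD mulmxA submxMr // sub_layer.
  rewrite (submx_trans (submxMl _ _) (layer_sub _)) /=.
  have : (L k.-1 :&: L k.+1 *m N)%MS *m N ^+ k.-1 = 0.
    by apply/eqP; rewrite -sub_kermx (submx_trans (capmxSl _ _)) // capmxSr.
  by rewrite eD -(prednK k_gt0) exprS -mulmxE !mulmxA => ->.
move: rk_sum rk_next rk_cur ker_next cap_img.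
set s := \rank (_ + _)%MS; set c := \rank (_ :&: (_ *m _))%MS.
set i1 := \rank (L k.+1 *m N); set k1 := \rank (L k.+1 :&: _)%MS.
set i0 := \rank (L k *m N); set k0 := \rank (L k :&: _)%MS; lia.
Qed.

End Layers.

(* Layer by layer, the tops of special chains of length k are selected
   greedily modulo the "base" of L_k (shorter chains and the image of L_(k+1));
   the spans of the selected chains then contain every layer, and layer rank
   convexity bounds the number of chains of each length. *)
Section EigenCover.
Variables (R : numClosedFieldType) (n v : nat) (A : 'M[nat]_n).
Hypothesis hA : regular_network A v.
Variables (lam : R) (S : 'M[R]_n) (r0 : {set 'I_n * 'I_n}).
Hypothesis S_stable : (S *m adjR R A <= S)%MS.
Hypothesis S_polydiag : (S == polydiag R r0)%MS.
Local Notation N := (shift_adj A lam).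
Local Notation L := (layer A lam S).

(* The base of L_k: L_(k-1) plus the image of L_(k+1) (absent at the top
   k = n, where L_(k+1) adds nothing to L_n). *)
Definition layer_base k : 'M[R]_n :=
  (L k.-1 + (if (k < n)%N then L k.+1 *m N else 0))%MS.

Definition selected_tops k (T : seq 'rV[R]_n) : Prop :=
  [/\ forall t, t \in T -> special_top A lam S k t,
      (size T + \rank (layer_base k) <= \rank (L k))%N &
      (L k <= layer_base k + span_seq T)%MS].

Lemma special_tops_select k : (0 < k <= n)%N -> exists T, selected_tops k T.
Proof.
case/andP=> k_gt0 _; apply: select_spanning => [|t [tS tk _ _]|z].
- rewrite addsmx_sub -{2}(prednK k_gt0) layer_mono /=.
  by case: ifP => _; rewrite ?sub0mx ?layer_shift.
- by rewrite sub_layer tS tk eqxx.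
rewrite sub_layer => /andP[zS /eqP zk].
have [s [s_sp z_s]] := span_special_tops hA S_stable S_polydiag k_gt0 zS zk.
by exists s; split => //; apply: submx_trans z_s _; rewrite addsmxS ?addsmxSl.
Qed.

Section SelectedTops.
Variable T : nat -> seq 'rV[R]_n.
Hypothesis T_spec : forall k, (0 < k <= n)%N -> selected_tops k (T k).

Definition tops_span : 'M[R]_n :=
  (\sum_(1 <= k < n.+1) \sum_(t <- T k) chain_space N k t)%MS.

Lemma chain_sub_tops_span k t : (0 < k <= n)%N -> t \in T k ->
  (chain_space N k t <= tops_span)%MS.
Proof.
move=> kn t_T; apply: (sub_sums_seq (i := k)); first by rewrite mem_index_iota ltnS.
exact: sub_sums_seq t_T _.
Qed.

Lemma tops_span_stable : (tops_span *m N <= tops_span)%MS.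
Proof.
apply: sums_seq_stable => k; rewrite mem_index_iota ltnS => kn.
apply: sums_seq_stable => t t_T; have [T_sp _ _] := T_spec kn.
by have [_ tk _ _] := T_sp t t_T; rewrite (eqmx_stable _ (chain_spaceE _ _ _)) chainmx_stable.
Qed.

Lemma span_tops_sub k : (0 < k <= n)%N -> (span_seq (T k) <= tops_span)%MS.
Proof.
move=> kn; apply: sums_seq_sub => t t_T; rewrite genmxE.
apply: submx_trans (chain_sub_tops_span kn t_T); rewrite chain_spaceE.
by have := @chainmx_pow _ _ N k t 0%N; rewrite expr0 mulmx1; apply; case/andP: kn.
Qed.

Lemma layer_sub_tops_span_below k : (0 < k <= n)%N -> (L k <= tops_span + L k.-1)%MS.
Proof.
move=> kn; have [m] := ubnP (n - k); elim: m k kn => // m IHm k /andP[k_gt0 kn] lt_m.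
have [_ _ Lk_sub] := T_spec (introT andP (conj k_gt0 kn)).
apply: submx_trans Lk_sub _; rewrite /layer_base !addsmx_sub addsmxSr /=.
rewrite (submx_trans (span_tops_sub _) (addsmxSl _ _)) ?k_gt0 // andbT.
case: ifP => [k_lt|_]; last by rewrite sub0mx.
have lt_m' : (n - k.+1 < m)%N by rewrite subnS prednK ?subn_gt0 // -ltnS.
have /(submxMr N) := IHm k.+1 (introT andP (conj (ltn0Sn k) k_lt)) lt_m'.
rewrite addsmxMr => /submx_trans; apply.
apply: addsmxS; first exact: tops_span_stable.
by rewrite -{1}(prednK k_gt0) (layer_shift lam S_stable).
Qed.

Lemma layer_sub_tops_span k : (k <= n)%N -> (L k <= tops_span)%MS.
Proof.
elim: k => [|k IHk] kn; first exact: layer0_sub.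
apply: submx_trans (layer_sub_tops_span_below (introT andP (conj (ltn0Sn k) kn))) _.
by rewrite addsmx_sub submx_refl IHk // ltnW.
Qed.

Lemma tops_count : (0 < n)%N ->
  (\sum_(1 <= k < n.+1) k * size (T k) <= \rank (L n))%N.
Proof.
move=> n_gt0; apply: (@weighted_layer_count (fun k => size (T k)) (fun k => \rank (L k))) => //.
- by have := mxrankS (layer0_sub A lam S (0 : 'M[R]_n)); rewrite mxrank0 leqn0 => /eqP.
- move=> k /andP[k_gt0 k_lt]; have [_ size_T _] := T_spec (introT andP (conj k_gt0 (ltnW k_lt))).
  move: size_T (layer_rank_convex lam S_stable k_gt0); rewrite /layer_base k_lt.
  set a := size (T k); set b := \rank (_ + _)%MS; set c := \rank (L k).
  set d := \rank (L k.-1); set e := \rank (L k.+1); lia.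
have [_ size_T _] := T_spec (introT andP (conj n_gt0 (leqnn n))).
by move: size_T; rewrite /layer_base ltnn addsmx0_id.
Qed.

End SelectedTops.

Lemma eigen_special_cover : exists Js, special_cover A S (L n) Js.
Proof.
have [n0|n_gt0] := posnP n.
  exists [::]; split; rewrite ?big_nil //.
  by have := layer_annihilated A lam S n; rewrite [X in _ ^+ X]n0 expr0 mulmx1 => ->.
have [T T_spec] : exists T, forall k, (0 < k <= n)%N -> selected_tops k (T k).
  apply: (ClassicalEpsilon.choice (fun k T => (0 < k <= n)%N -> selected_tops k T)) => k.
  have [/special_tops_select [T T_spec]|not_k] := boolP (0 < k <= n)%N.
    by exists T.
  by exists [::].
set chains := fun k => [seq chain_space N k t | t <- T k].
exists (flatten [seq chains k | k <- index_iota 1 n.+1]); split.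
- move=> J /flattenP [s /mapP [k k_in ->]] /mapP [t t_T ->].
  move: k_in; rewrite mem_index_iota ltnS => kn; have [T_sp _ _] := T_spec k kn.
  have [tS tk _ t_sp] := T_sp t t_T; split => //.
  by rewrite chain_spaceE chainmx_sub // S_stable_shift.
- rewrite big_flatten big_map (eq_bigr _ (fun k _ => big_map _ _ _)).
  exact: layer_sub_tops_span.
rewrite big_flatten big_map /=; apply: leq_trans (tops_count T_spec n_gt0).
apply: leq_sum => k _; rewrite big_map mulnC -sum1_size big_distrl /=.
by apply: leq_sum => t _; rewrite mul1n rank_chain_space.
Qed.

End EigenCover.

Lemma coprimep_XsubC_prod (F : fieldType) (a : F) (ls : seq F) m : a \notin ls ->
  coprimep (('X - a%:P) ^+ m) (\prod_(l <- ls) ('X - l%:P) ^+ m).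
Proof.
elim: ls => [|b ls IHls]; first by rewrite big_nil coprimep1.
rewrite inE negb_or big_cons => /andP[ab a_ls]; rewrite coprimepMr IHls // andbT.
by rewrite coprimep_expr // coprimep_expl // coprimep_XsubC root_XsubC eq_sym.
Qed.

Section StablePrimaryDecomposition.
Variables (F : fieldType) (n' : nat) (g S : 'M[F]_n'.+1).
Hypothesis S_stable : (S *m g <= S)%MS.

(* Bezout: for coprime p, q, x = x (u p)(g) + x (v q)(g), and S is stable
   under polynomials in g. *)
Lemma stable_kermxpolyM p q : coprimep p q ->
  (S :&: kermxpoly g (p * q) <= (S :&: kermxpoly g p) + (S :&: kermxpoly g q))%MS.
Proof.
case/Bezout_eq1_coprimepP => [[u w]] /= bezout; set X := (S :&: _)%MS.
have XS : (X <= S)%MS := capmxSl _ _.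
have X_pq : X *m horner_mx g (p * q) = 0 by apply/sub_kermxP; apply: capmxSr.
have X_kills r c d : c * r = p * q * d -> (X *m horner_mx g c <= S :&: kermxpoly g r)%MS.
  move=> cr; rewrite sub_capmx (submx_trans (submxMr _ XS)) ?horner_mx_stable //=.
  apply/sub_kermxP; rewrite -mulmxA mulmxE -rmorphM /= cr.
  by rewrite rmorphM /= -mulmxE mulmxA X_pq mul0mx.
have -> : X = X *m horner_mx g (u * p) + X *m horner_mx g (w * q).
  by rewrite -mulmxDr -rmorphD /= bezout rmorph1 mulmx1.
by rewrite addsmxC addmx_sub_adds // (X_kills q (u * p) u, X_kills p (w * q) w) //; ring.
Qed.

Lemma stable_sub_sum_kermxpoly (ls : seq F) m : uniq ls ->
  (S :&: kermxpoly g (\prod_(l <- ls) ('X - l%:P) ^+ m) <=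
     \sum_(l <- ls) (S :&: kermxpoly g (('X - l%:P) ^+ m)))%MS.
Proof.
elim: ls => [|a ls IHls]; first by rewrite !big_nil kermxpoly1 capmx0 sub0mx.
rewrite /= => /andP[a_ls uniq_ls]; rewrite !big_cons.
apply: submx_trans (stable_kermxpolyM (coprimep_XsubC_prod m a_ls)) _.
by rewrite addsmxS ?IHls.
Qed.

End StablePrimaryDecomposition.

Lemma rank_sum_cap_geigenspace (F : fieldType) n (g S : 'M[F]_n) (ls : seq F) :
  uniq ls -> (\sum_(l <- ls) \rank (S :&: geigenspace g l) <= \rank S)%N.
Proof.
move=> uniq_ls; rewrite (big_nth 0) big_mkord.
pose X (i : 'I_(size ls)) := (S :&: geigenspace g ls`_i)%MS.
have inj_ls : {in predT &, injective (fun i : 'I_(size ls) => ls`_i)}.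
  by move=> i j _ _ /eqP; rewrite nth_uniq // => /eqP/val_inj.
have dirG := mxdirect_sum_geigenspace g inj_ls.
have dirX : mxdirect (\sum_i X i).
  apply/mxdirect_sumsP => i _; apply/eqP; rewrite -submx0.
  rewrite -[X in (_ <= X)%MS](mxdirect_sumsP dirG i isT).
  by apply: capmxS; [apply: capmxSr | apply: sumsmxS => j _; apply: capmxSr].
rewrite -(mxdirectP dirX) /=; apply: mxrankS; apply/sumsmx_subP => i _; exact: capmxSl.
Qed.

(* Over an algebraically closed field g is killed by prod_l (X - l)^n, the
   product running over its distinct eigenvalues (Cayley-Hamilton). *)
Lemma split_annihilator (F : closedFieldType) n' (g : 'M[F]_n'.+1) :
  exists ls : seq F, uniq ls /\ horner_mx g (\prod_(l <- ls) ('X - l%:P) ^+ n'.+1) = 0.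
Proof.
have [rs char_rs] := closed_field_poly_normal (char_poly g).
rewrite (monicP (char_poly_monic g)) scale1r in char_rs.
have size_rs : size rs = n'.+1.
  by have := size_char_poly g; rewrite char_rs size_prod_XsubC => -[].
exists (undup rs); split; first exact: undup_uniq.
apply/mxminpoly_minP; apply: dvdp_trans (mxminpoly_dvd_char g) _.
rewrite char_rs -prodr_undup_exp_count.
apply: (big_ind2 (fun p q => p %| q)) => // [p1 p2 q1 q2|l _]; first exact: dvdp_mul.
by apply: dvdp_exp2l; rewrite -size_rs count_size.
Qed.

Lemma stable_primary_decomposition (F : closedFieldType) n' (g S : 'M[F]_n'.+1) :
  (S *m g <= S)%MS -> exists ls : seq F,
  (S <= \sum_(l <- ls) (S :&: geigenspace g l))%MS /\
  (\sum_(l <- ls) \rank (S :&: geigenspace g l) <= \rank S)%N.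
Proof.
move=> S_stable; have [ls [uniq_ls annih]] := split_annihilator g.
exists ls; split; last exact: rank_sum_cap_geigenspace.
apply: submx_trans (stable_sub_sum_kermxpoly S_stable n'.+1 uniq_ls).
by rewrite sub_capmx submx_refl /kermxpoly annih kermx0 submx1.
Qed.

Section Covers.
Variables (R : numClosedFieldType) (n : nat) (A : 'M[nat]_n) (S : 'M[R]_n).

Lemma special_cover_flatten (I : eqType) (ls : seq I) (X : I -> 'M[R]_n)
    (Js : I -> seq 'M[R]_n) :
  (forall l, special_cover A S (X l) (Js l)) ->
  (S <= \sum_(l <- ls) X l)%MS -> (\sum_(l <- ls) \rank (X l) <= \rank S)%N ->
  special_cover A S S (flatten [seq Js l | l <- ls]).
Proof.
move=> cover_X S_X rk_X; split.
- by move=> J /flattenP [s /mapP [l _ ->]]; case: (cover_X l) => + _ _; apply.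
- apply: submx_trans S_X _; rewrite big_flatten big_map; apply: sums_seq_sub => l l_ls.
  by case: (cover_X l) => _ X_Js _; apply: sub_sums_seq l_ls X_Js.
rewrite big_flatten big_map /=; apply: leq_trans rk_X; apply: leq_sum => l _.
by case: (cover_X l).
Qed.

(* A cover of S by subspaces of S is a direct sum decomposition of S:
   the dimensions of the pieces add up to at most the dimension of their sum. *)
Lemma special_cover_direct Js : special_cover A S S Js ->
  exists m (J : 'I_m -> 'M[R]_n), (forall i, is_special A (J i)) /\
    mxdirect (\sum_(i < m) J i) /\ (S == \sum_(i < m) J i)%MS.
Proof.
case=> Js_sp S_Js rk_Js; exists (size Js), (fun i => nth 0 Js i).
have sumE : (\sum_(i < size Js) nth 0 Js i)%MS = (\sum_(J <- Js) J)%MS.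
  by rewrite (big_nth 0) big_mkord.
have Js_S : (\sum_(J <- Js) J <= S)%MS by apply: sums_seq_sub => J /Js_sp [].
split; [|split].
- by move=> i; case: (Js_sp _ (mem_nth 0 (ltn_ord i))).
- rewrite mxdirectEgeq /= sumE.
  by rewrite (big_nth 0) big_mkord in rk_Js; apply: leq_trans rk_Js (mxrankS S_Js).
by rewrite sumE; apply/andP.
Qed.

End Covers.

Lemma synchrony_special_cover (R : numClosedFieldType) (n v : nat) (A : 'M[nat]_n)
    (S : 'M[R]_n) (r0 : {set 'I_n * 'I_n}) :
  regular_network A v -> (S *m adjR R A <= S)%MS -> (S == polydiag R r0)%MS ->
  exists Js, special_cover A S S Js.
Proof.
case: n A S r0 => [|n'] A S r0 hA S_stable S_polydiag.
  by exists [::]; split; rewrite ?big_nil // (thinmx0 S) sub0mx.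
have [ls [S_ls rk_ls]] := stable_primary_decomposition S_stable.
have [Js cover_Js] : exists Js, forall l, special_cover A S (layer A l S n'.+1) (Js l).
  apply: (ClassicalEpsilon.choice (fun l Js => special_cover A S (layer A l S n'.+1) Js)).
  by move=> l; have [Js cover] := eigen_special_cover hA l S_stable S_polydiag; exists Js.
exists (flatten [seq Js l | l <- ls]); apply: special_cover_flatten cover_Js _ _.
  by move: S_ls; under eq_bigr => l _ do rewrite geigenspaceE.
by move: rk_ls; under eq_bigr => l _ do rewrite geigenspaceE.
Qed.

Theorem mainTheorem7 (R : numClosedFieldType) (n v : nat) (A : 'M[nat]_n)
    (hA : regular_network A v) (S : 'M[R]_n) :
  is_synchrony A S <->
  is_polydiagonal S /\
  exists (m : nat) (J : 'I_m -> 'M[R]_n),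
    (forall i, is_special A (J i)) /\
    mxdirect (\sum_(i < m) J i) /\ (S == \sum_(i < m) J i)%MS.
Proof.
split.
  case=> [[r0 S_polydiag] S_stable]; split; first by exists r0.
  have [Js cover_Js] := synchrony_special_cover hA S_stable S_polydiag.
  exact: special_cover_direct cover_Js.
case=> [[r0 S_polydiag] [m [J [J_special [_ /eqmxP eqS]]]]]; split; first by exists r0.
rewrite (eqmx_stable _ eqS); apply: stablemx_sums => i.
exact: special_stable (J_special i).
Qed.
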